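(* Let $a=(a_1,a_2)\in(0,\infty)^2$ and $t=(t_1,t_2)$ with $1<t_1<t_2$, and let $$A_0:=\frac{\sqrt3}{2}\left(\frac{a_2t_2(t_2-1)S_1(t_2+2)}{a_1t_1(t_1-1)S_1(t_1+2)}\right)^{\frac1{t_2-t_1}}.$$ Then: (1) if $0<A<A_0$, $(1/2,\sqrt3/2)$ is a strict local minimizer of $(x,y)\mapsto E_{V^{LJ}_{a,t}}(x,y,A)$; (2) if $A>A_0$, $(1/2,\sqrt3/2)$ is a strict local maximizer of $(x,y)\mapsto E_{V^{LJ}_{a,t}}(x,y,A)$.
   Context: $V^{LJ}_{a,t}(r)=\frac{a_2}{r^{t_2}}-\frac{a_1}{r^{t_1}}$ for $r>0$. For $A>0$, $x\in\mathbb R$, $y>0$, $E_{f}(x,y,A)=\sum_{m,n} f\left(A\left[\frac1y(m+xn)^2+yn^2\right]\right)$, where $\sum_{m,n}$ denotes summation over all $(m,n)\in\mathbb Z^2\setminus\{(0,0)\}$. $S_1(s)=\sum_{m,n}\frac{m^4}{(m^2+mn+n^2)^s}$. *)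

From Stdlib Require Import Reals ZArith Bool ClassicalEpsilon.
Open Scope R_scope.

Definition sq_partial (F : Z -> Z -> R) (N : nat) : R :=
  sum_f_R0 (fun i =>
    sum_f_R0 (fun j =>
      let m := (Z.of_nat i - Z.of_nat N)%Z in
      let n := (Z.of_nat j - Z.of_nat N)%Z in
      if (Z.eqb m 0 && Z.eqb n 0)%bool then 0 else F m n) (2 * N)) (2 * N).

(* The lattice sum over Z^2 \ {(0,0)}: limit of square partial sums
   (all sums used below are absolutely convergent, so this is the sum). *)
Definition lattice_sum (F : Z -> Z -> R) : R :=
  epsilon (inhabits 0) (fun L => Un_cv (sq_partial F) L).

Definition V_LJ (a1 a2 t1 t2 : R) (r : R) : R :=
  a2 / Rpower r t2 - a1 / Rpower r t1.

Definition E_f (f : R -> R) (x y A : R) : R :=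
  lattice_sum (fun m n =>
    f (A * ((1 / y) * (IZR m + x * IZR n) ^ 2 + y * (IZR n) ^ 2))).

Definition S1 (s : R) : R :=
  lattice_sum (fun m n =>
    (IZR m) ^ 4 / Rpower ((IZR m) ^ 2 + IZR m * IZR n + (IZR n) ^ 2) s).

Definition strict_local_min (g : R -> R -> R) (x0 y0 : R) : Prop :=
  exists eps, eps > 0 /\
    forall x y, y > 0 -> Rabs (x - x0) < eps -> Rabs (y - y0) < eps ->
      (x, y) <> (x0, y0) -> g x0 y0 < g x y.

Definition strict_local_max (g : R -> R -> R) (x0 y0 : R) : Prop :=
  exists eps, eps > 0 /\
    forall x y, y > 0 -> Rabs (x - x0) < eps -> Rabs (y - y0) < eps ->
      (x, y) <> (x0, y0) -> g x y < g x0 y0.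

Definition A0 (a1 a2 t1 t2 : R) : R :=
  sqrt 3 / 2 *
  Rpower ((a2 * t2 * (t2 - 1) * S1 (t2 + 2)) / (a1 * t1 * (t1 - 1) * S1 (t1 + 2)))
         (1 / (t2 - t1)).

(* Write [x = 1/2 + u] and [y = hex_y + v] with [hex_y = sqrt 3 / 2].  At each lattice point
   the form [(m + x n)^2 / y + y n^2] equals [hexq m n (1 + alpha + beta) / (hex_y (1 + delta))],
   where [hexq m n = m^2 + m n + n^2] and [delta], [alpha], [beta] are of order one, one and
   two in [(u, v)].  Expanding the summand [form^-s] to second order with a cubic remainder
   and summing over the lattice, the first-order terms cancel and the second-order terms
   collapse to a multiple of [u^2 + v^2], because a lattice sum is unchanged when its summand
   is averaged over the rotation [(m, n) |-> (n, -m-n)] of the hexagonal lattice: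
     zeta(s; x, y) = hex_y^s Z(s) (1 + s (s - 1) / 3 (u^2 + v^2)) + O((|u| + |v|)^3),
   with [Z(s) = sum hexq^-s = 3/2 S1(s + 2)].  So the Hessian of the energy
   [a2 A^-t2 zeta(t2; x, y) - a1 A^-t1 zeta(t1; x, y)] at the hexagonal point is a multiple
   of the identity, with the sign of [(A0 / A)^(t2 - t1) - 1].  Convergence and rotation
   invariance are proved for the square partial sums defining [lattice_sum], from a decay
   bound [|F| <= C hexq^-s] with [s > 1]. *)

From Stdlib Require Import Reals Lra Lia Psatz ZArith Bool ClassicalEpsilon.
From Coquelicot Require Import Coquelicot.
Open Scope R_scope.

Lemma Rpower_pos x y : 0 < Rpower x y.
Proof. apply exp_pos. Qed.

Lemma Rpower_base_1 y : Rpower 1 y = 1.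
Proof. unfold Rpower. rewrite ln_1, Rmult_0_r. apply exp_0. Qed.

Lemma Rpower_div x y s : 0 < x -> 0 < y -> Rpower (x / y) s = Rpower x s / Rpower y s.
Proof.
  intros. unfold Rpower, Rdiv. rewrite ln_mult, ln_Rinv by (try apply Rinv_0_lt_compat; auto).
  rewrite <- exp_Ropp, <- exp_plus. f_equal. ring.
Qed.

Lemma CV_scal (u : nat -> R) a l : Un_cv u l -> Un_cv (fun n => a * u n) (a * l).
Proof.
  intro H. apply (CV_mult (fun _ => a) u); auto.
  intros e he; exists 0%nat; intros; unfold Rdist; rewrite Rminus_diag, Rabs_R0; auto.
Qed.

(** * Square lattice sums *)

Definition punctured (F : Z -> Z -> R) (m n : Z) : R :=
  if (Z.eqb m 0 && Z.eqb n 0)%bool then 0 else F m n.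

Definition box_index (N i : nat) : Z := (Z.of_nat i - Z.of_nat N)%Z.

Lemma sq_partial_punctured F N : sq_partial F N =
  sum_f_R0 (fun i => sum_f_R0 (fun j =>
    punctured F (box_index N i) (box_index N j)) (2 * N)) (2 * N).
Proof. reflexivity. Qed.

Definition is_lattice_sum (F : Z -> Z -> R) (L : R) : Prop := Un_cv (sq_partial F) L.

Lemma lattice_sum_eq F L : is_lattice_sum F L -> lattice_sum F = L.
Proof.
  intro H. unfold lattice_sum.
  assert (E : exists L0, Un_cv (sq_partial F) L0) by (exists L; exact H).
  exact (UL_sequence _ _ _ (epsilon_spec (inhabits 0) _ E) H).
Qed.

Lemma is_lattice_sum_unique F L1 L2 :
  is_lattice_sum F L1 -> is_lattice_sum F L2 -> L1 = L2.
Proof. apply UL_sequence. Qed.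

Lemma punctured_ext F G m n :
  (forall m n, (m, n) <> (0%Z, 0%Z) -> F m n = G m n) ->
  punctured F m n = punctured G m n.
Proof.
  intro H. unfold punctured.
  destruct (Z.eqb_spec m 0), (Z.eqb_spec n 0); simpl; auto; apply H; congruence.
Qed.

Lemma punctured_le F G m n :
  (forall m n, (m, n) <> (0%Z, 0%Z) -> F m n <= G m n) ->
  punctured F m n <= punctured G m n.
Proof.
  intro H. unfold punctured.
  destruct (Z.eqb_spec m 0), (Z.eqb_spec n 0); simpl; try lra; apply H; congruence.
Qed.

Lemma sq_partial_ext F G N :
  (forall m n, (m, n) <> (0%Z, 0%Z) -> F m n = G m n) ->
  sq_partial F N = sq_partial G N.
Proof.
  intro H. rewrite !sq_partial_punctured.
  apply sum_eq; intros; apply sum_eq; intros; apply punctured_ext, H.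
Qed.

Lemma is_lattice_sum_ext F G L :
  (forall m n, (m, n) <> (0%Z, 0%Z) -> F m n = G m n) ->
  is_lattice_sum F L -> is_lattice_sum G L.
Proof.
  intros H C e he. destruct (C e he) as [N HN].
  exists N. intros n hn. rewrite <- (sq_partial_ext F G n H). auto.
Qed.

Lemma sq_partial_lin a b F G N :
  sq_partial (fun m n => a * F m n + b * G m n) N = a * sq_partial F N + b * sq_partial G N.
Proof.
  rewrite !sq_partial_punctured, !scal_sum, <- sum_plus.
  apply sum_eq; intros.
  rewrite (Rmult_comm (sum_f_R0 _ _) a), (Rmult_comm (sum_f_R0 _ _) b), !scal_sum, <- sum_plus.
  apply sum_eq; intros. unfold punctured. destruct (_ && _)%bool; ring.
Qed.

Lemma is_lattice_sum_lin a b F G LF LG :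
  is_lattice_sum F LF -> is_lattice_sum G LG ->
  is_lattice_sum (fun m n => a * F m n + b * G m n) (a * LF + b * LG).
Proof.
  intros HF HG e he.
  destruct (CV_plus _ _ _ _ (CV_scal _ a _ HF) (CV_scal _ b _ HG) e he) as [N HN].
  exists N. intros n hn. rewrite sq_partial_lin. auto.
Qed.

Lemma is_lattice_sum_add F G LF LG :
  is_lattice_sum F LF -> is_lattice_sum G LG ->
  is_lattice_sum (fun m n => F m n + G m n) (LF + LG).
Proof.
  intros HF HG. rewrite <- (Rmult_1_l LF), <- (Rmult_1_l LG).
  apply (is_lattice_sum_ext (fun m n => 1 * F m n + 1 * G m n)).
  - intros; ring.
  - now apply is_lattice_sum_lin.
Qed.

Lemma is_lattice_sum_scal a F L :
  is_lattice_sum F L -> is_lattice_sum (fun m n => a * F m n) (a * L).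
Proof.
  intro HF. replace (a * L) with (a * L + 0 * L) by ring.
  apply (is_lattice_sum_ext (fun m n => a * F m n + 0 * F m n)).
  - intros; ring.
  - now apply is_lattice_sum_lin.
Qed.

Lemma sq_partial_le F G N :
  (forall m n, (m, n) <> (0%Z, 0%Z) -> F m n <= G m n) ->
  sq_partial F N <= sq_partial G N.
Proof.
  intro H. rewrite !sq_partial_punctured.
  apply sum_Rle; intros; apply sum_Rle; intros; apply punctured_le, H.
Qed.

Lemma is_lattice_sum_abs_le F G L LG :
  is_lattice_sum F L -> is_lattice_sum G LG ->
  (forall m n, (m, n) <> (0%Z, 0%Z) -> Rabs (F m n) <= G m n) -> Rabs L <= LG.
Proof.
  intros HF HG H. apply Rabs_le_between.
  assert (HG' := is_lattice_sum_scal (-1) _ _ HG).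
  split.
  - replace (- LG) with (-1 * LG) by ring.
    eapply Rle_cv_lim; [intro N; apply sq_partial_le | exact HG' | exact HF].
    intros m n hmn. specialize (H m n hmn). apply Rabs_le_between in H. lra.
  - eapply Rle_cv_lim; [intro N; apply sq_partial_le | exact HF | exact HG].
    intros m n hmn. specialize (H m n hmn). apply Rabs_le_between in H. lra.
Qed.

Definition hexq (m n : Z) : R := IZR m ^ 2 + IZR m * IZR n + IZR n ^ 2.

Lemma hexq_bounds m n :
  (IZR m ^ 2 + IZR n ^ 2) / 2 <= hexq m n /\
  IZR m ^ 2 <= 2 * hexq m n /\ IZR n ^ 2 <= 2 * hexq m n.
Proof.
  unfold hexq. pose proof (pow2_ge_0 (IZR m + IZR n)). pose proof (pow2_ge_0 (IZR m)).
  pose proof (pow2_ge_0 (IZR n)). simpl in *. repeat split; nra.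
Qed.

Lemma hexq_pos m n : (m, n) <> (0%Z, 0%Z) -> 0 < hexq m n.
Proof.
  intro H. destruct (hexq_bounds m n) as [h _].
  assert (hsq : forall z : Z, z <> 0%Z -> 0 < IZR z ^ 2).
  { intros z hz. simpl. rewrite Rmult_1_r. apply Rsqr_pos_lt, not_0_IZR, hz. }
  pose proof (pow2_ge_0 (IZR m)). pose proof (pow2_ge_0 (IZR n)).
  destruct (Z.eq_dec m 0) as [->|hm].
  - assert (hn : n <> 0%Z) by congruence. pose proof (hsq n hn). lra.
  - pose proof (hsq m hm). lra.
Qed.

Definition decays (s C : R) (F : Z -> Z -> R) : Prop :=
  forall m n, (m, n) <> (0%Z, 0%Z) -> Rabs (F m n) <= C / Rpower (hexq m n) s.

Lemma decays_nonneg s C F : decays s C F -> 0 <= C.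
Proof.
  intro H. specialize (H 1%Z 0%Z ltac:(congruence)).
  pose proof (Rabs_pos (F 1%Z 0%Z)). pose proof (Rpower_pos (hexq 1 0) s).
  apply (Rmult_le_reg_r (/ Rpower (hexq 1 0) s)); [apply Rinv_0_lt_compat; lra | lra].
Qed.

(* The decay bound at the least value of [hexq] outside the box [-N, N]^2. *)
Definition decay_tail (s C : R) (N : nat) : R := C / Rpower ((INR N + 1) ^ 2 / 2) s.

Lemma decay_tail_eq s C N : decay_tail s C N = C * Rpower 2 s / Rpower (INR N + 1) (2 * s).
Proof.
  unfold decay_tail. pose proof (pos_INR N).
  rewrite Rpower_div, <- Rpower_pow, Rpower_mult by (try apply pow_lt; lra).
  replace (INR 2 * s) with (2 * s) by (simpl; ring).
  pose proof (Rpower_pos 2 s). pose proof (Rpower_pos (INR N + 1) (2 * s)).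
  field. split; lra.
Qed.

Lemma decay_tail_nonneg s C N : 0 <= C -> 0 <= decay_tail s C N.
Proof. intro hC. apply Rdiv_le_0_compat; [exact hC | apply Rpower_pos]. Qed.

Lemma hexq_outside_box N m n :
  (Z.of_nat N + 1 <= Z.abs m \/ Z.of_nat N + 1 <= Z.abs n)%Z ->
  (INR N + 1) ^ 2 / 2 <= hexq m n.
Proof.
  intro H. destruct (hexq_bounds m n) as [h _].
  assert (hz : forall z, (Z.of_nat N + 1 <= Z.abs z)%Z -> (INR N + 1) ^ 2 <= IZR z ^ 2).
  { intros z hz. apply IZR_le in hz. rewrite abs_IZR, plus_IZR, <- INR_IZR_INZ in hz.
    rewrite <- (pow2_abs (IZR z)). pose proof (pos_INR N). apply pow_incr; lra. }
  pose proof (pow2_ge_0 (IZR m)). pose proof (pow2_ge_0 (IZR n)).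
  destruct H as [H|H]; pose proof (hz _ H); lra.
Qed.

Lemma punctured_le_decay_tail s C F N m n : 0 < s -> decays s C F ->
  (Z.of_nat N + 1 <= Z.abs m \/ Z.of_nat N + 1 <= Z.abs n)%Z ->
  Rabs (punctured F m n) <= decay_tail s C N.
Proof.
  intros hs hF H. pose proof (decays_nonneg _ _ _ hF) as hC. pose proof (pos_INR N).
  assert (hN : 0 < (INR N + 1) ^ 2 / 2) by (apply Rdiv_lt_0_compat; [apply pow_lt|]; lra).
  pose proof (hexq_outside_box N m n H).
  unfold punctured. destruct (Z.eqb_spec m 0), (Z.eqb_spec n 0); simpl.
  1: rewrite Rabs_R0; now apply decay_tail_nonneg.
  all: eapply Rle_trans; [apply hF; congruence|].
  all: apply Rmult_le_compat_l; [exact hC|]; apply Rinv_le_contravar; [apply Rpower_pos|].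
  all: apply Rle_Rpower_l; lra.
Qed.

Definition box_row (F : Z -> Z -> R) (N : nat) (m : Z) : R :=
  sum_f_R0 (fun j => punctured F m (box_index N j)) (2 * N).

Lemma sum_box_succ (f : Z -> R) N :
  sum_f_R0 (fun j => f (box_index (S N) j)) (2 * S N) =
  f (- (Z.of_nat N + 1))%Z + sum_f_R0 (fun j => f (box_index N j)) (2 * N) +
  f (Z.of_nat N + 1)%Z.
Proof.
  replace (2 * S N)%nat with (S (S (2 * N))) by lia.
  rewrite tech5, decomp_sum by lia. simpl Init.Nat.pred.
  unfold box_index. f_equal; [f_equal|]; [f_equal; lia | apply sum_eq; intros; f_equal; lia |].
  f_equal. lia.
Qed.

Lemma sq_partial_succ F N : sq_partial F (S N) - sq_partial F N =
  box_row F (S N) (- (Z.of_nat N + 1))%Z + box_row F (S N) (Z.of_nat N + 1)%Z +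
  sum_f_R0 (fun i => punctured F (box_index N i) (- (Z.of_nat N + 1))%Z +
                     punctured F (box_index N i) (Z.of_nat N + 1)%Z) (2 * N).
Proof.
  change (sq_partial F (S N)) with
    (sum_f_R0 (fun i => box_row F (S N) (box_index (S N) i)) (2 * S N)).
  rewrite sum_box_succ, sq_partial_punctured.
  assert (E : sum_f_R0 (fun i => box_row F (S N) (box_index N i)) (2 * N) =
    sum_f_R0 (fun i => punctured F (box_index N i) (- (Z.of_nat N + 1))%Z +
                       punctured F (box_index N i) (Z.of_nat N + 1)%Z) (2 * N) +
    sum_f_R0 (fun i => sum_f_R0 (fun j =>
       punctured F (box_index N i) (box_index N j)) (2 * N)) (2 * N)).
  { rewrite <- sum_plus. apply sum_eq; intros. unfold box_row. rewrite sum_box_succ. ring. }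
  rewrite E. ring.
Qed.

Lemma sum_f_R0_abs_le (g : nat -> R) n B :
  (forall j, (j <= n)%nat -> Rabs (g j) <= B) -> Rabs (sum_f_R0 g n) <= INR (S n) * B.
Proof.
  intro H. eapply Rle_trans; [apply sum_f_R0_triangle|].
  rewrite Rmult_comm, <- sum_cte. apply sum_Rle. auto.
Qed.

Lemma sq_partial_succ_le s C F N : 0 < s -> decays s C F ->
  Rabs (sq_partial F (S N) - sq_partial F N) <=
  8 * C * Rpower 2 s / Rpower (INR N + 1) (2 * s - 1).
Proof.
  intros hs hF. rewrite sq_partial_succ.
  set (b := decay_tail s C N).
  assert (hrow : forall m, (Z.of_nat N + 1 <= Z.abs m)%Z ->
    Rabs (box_row F (S N) m) <= (2 * INR N + 3) * b).
  { intros m hm. replace (2 * INR N + 3) with (INR (S (2 * S N)))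
      by (rewrite S_INR, mult_INR, (S_INR N); simpl; ring).
    apply sum_f_R0_abs_le. intros. apply punctured_le_decay_tail; auto. }
  assert (hcol : Rabs (sum_f_R0 (fun i => punctured F (box_index N i) (- (Z.of_nat N + 1))%Z +
      punctured F (box_index N i) (Z.of_nat N + 1)%Z) (2 * N)) <= (2 * INR N + 1) * (2 * b)).
  { replace (2 * INR N + 1) with (INR (S (2 * N)))
      by (rewrite S_INR, mult_INR; simpl; ring).
    apply sum_f_R0_abs_le. intros. eapply Rle_trans; [apply Rabs_triang|].
    pose proof (punctured_le_decay_tail s C F N (box_index N j) (- (Z.of_nat N + 1)) hs hF
      ltac:(right; lia)) as h1.
    pose proof (punctured_le_decay_tail s C F N (box_index N j) (Z.of_nat N + 1) hs hF
      ltac:(right; lia)) as h2.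
    fold b in h1, h2. lra. }
  pose proof (hrow (- (Z.of_nat N + 1))%Z ltac:(lia)).
  pose proof (hrow (Z.of_nat N + 1)%Z ltac:(lia)).
  assert (E : (8 * INR N + 8) * b = 8 * C * Rpower 2 s / Rpower (INR N + 1) (2 * s - 1)).
  { unfold b. rewrite decay_tail_eq. pose proof (pos_INR N).
    replace (Rpower (INR N + 1) (2 * s)) with (Rpower (INR N + 1) (2 * s - 1) * (INR N + 1))
      by (rewrite <- (Rpower_1 (INR N + 1)) at 2 by lra; rewrite <- Rpower_plus; f_equal; ring).
    pose proof (Rpower_pos (INR N + 1) (2 * s - 1)). field. lra. }
  rewrite <- E.
  eapply Rle_trans; [apply Rabs_triang|].
  eapply Rle_trans; [apply Rplus_le_compat_r, Rabs_triang|]. lra.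
Qed.

Lemma Rpower_series_term_le q k : 1 < q -> 1 <= k ->
  / Rpower (k + 1) q <= (Rpower k (1 - q) - Rpower (k + 1) (1 - q)) / (q - 1).
Proof.
  intros hq hk.
  destruct (MVT_cor2 (fun x => Rpower x (1 - q)) (fun x => (1 - q) * Rpower x (1 - q - 1))
      k (k + 1)) as [c [Hc1 Hc2]]; [lra | intros; apply derivable_pt_lim_power; lra |].
  cbv beta in Hc1.
  replace (Rpower k (1 - q) - Rpower (k + 1) (1 - q))
    with (- ((1 - q) * Rpower c (1 - q - 1) * (k + 1 - k))) by (rewrite <- Hc1; ring).
  replace (1 - q - 1) with (- q) by ring. rewrite Rpower_Ropp.
  replace (- ((1 - q) * / Rpower c q * (k + 1 - k)) / (q - 1)) with (/ Rpower c q)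
    by (pose proof (Rpower_pos c q); field; lra).
  apply Rinv_le_contravar; [apply Rpower_pos|]. apply Rle_Rpower_l; lra.
Qed.

Lemma Rpower_series_cv q : 1 < q -> ex_series (fun k => / Rpower (INR k + 1) q).
Proof.
  intro hq. apply ex_series_Reals_1, growing_cv.
  - intro n. rewrite tech5.
    pose proof (Rinv_0_lt_compat _ (Rpower_pos (INR (S n) + 1) q)). lra.
  - assert (Hb : forall n, sum_f_R0 (fun k => / Rpower (INR k + 1) q) n <=
      1 + (1 - Rpower (INR n + 1) (1 - q)) / (q - 1)).
    { induction n as [|n IH].
      - simpl. rewrite Rplus_0_l, !Rpower_base_1. lra.
      - rewrite tech5, S_INR. pose proof (pos_INR n).
        pose proof (Rpower_series_term_le q (INR n + 1) hq). lra. }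
    exists (1 + / (q - 1)). intros x [n ->]. eapply Rle_trans; [apply Hb|].
    pose proof (Rpower_pos (INR n + 1) (1 - q)).
    assert (0 < / (q - 1)) by (apply Rinv_0_lt_compat; lra). unfold Rdiv. nra.
Qed.

Lemma is_lattice_sum_of_decays s C F : 1 < s -> decays s C F ->
  exists L, is_lattice_sum F L.
Proof.
  intros hs hF.
  assert (Hshell : ex_series (fun N => sq_partial F (S N) - sq_partial F N)).
  { apply (@ex_series_le R_AbsRing R_CompleteNormedModule _
      (fun N => 8 * C * Rpower 2 s * / Rpower (INR N + 1) (2 * s - 1))).
    - intro N. apply sq_partial_succ_le; [lra | exact hF].
    - apply (ex_series_scal_l (V := R_NormedModule) (8 * C * Rpower 2 s)), Rpower_series_cv. lra. }
  destruct (ex_series_Reals_0 _ Hshell) as [l Hl].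
  exists (sq_partial F 0 + l). intros e he. destruct (Hl e he) as [N HN].
  exists (S N). intros n hn. destruct n as [|n]; [lia|].
  assert (E : sq_partial F (S n) =
    sq_partial F 0 + sum_f_R0 (fun N => sq_partial F (S N) - sq_partial F N) n).
  { clear. induction n; simpl; [ring|]. rewrite <- Rplus_assoc, <- IHn. ring. }
  unfold Rdist. rewrite E.
  match goal with |- Rabs (?a + ?b - (?a + ?c)) < _ =>
    replace (a + b - (a + c)) with (b - c) by ring end.
  apply HN. lia.
Qed.

(** * Invariance under the rotation of the hexagonal lattice *)

Lemma sum_f_R0_swap (f : nat -> nat -> R) n m :
  sum_f_R0 (fun i => sum_f_R0 (fun j => f i j) m) n =
  sum_f_R0 (fun j => sum_f_R0 (fun i => f i j) n) m.
Proof.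
  induction n as [|n IH]; [reflexivity|].
  rewrite tech5, IH, <- sum_plus. apply sum_eq; intros. now rewrite tech5.
Qed.

Lemma is_lattice_sum_transpose F L :
  is_lattice_sum F L -> is_lattice_sum (fun m n => F n m) L.
Proof.
  intros H e he. destruct (H e he) as [N HN]. exists N. intros n hn.
  replace (sq_partial (fun m n => F n m) n) with (sq_partial F n); auto.
  rewrite !sq_partial_punctured, sum_f_R0_swap.
  apply sum_eq; intros; apply sum_eq; intros. unfold punctured. now rewrite andb_comm.
Qed.

Lemma sum_f_R0_reverse (f : nat -> R) n : sum_f_R0 (fun j => f (n - j)%nat) n = sum_f_R0 f n.
Proof.
  revert f. induction n as [|n IH]; intros f; [reflexivity|].
  rewrite decomp_sum by lia. simpl Init.Nat.pred.
  rewrite (sum_eq _ (fun i => f (n - i)%nat)) by (intros; f_equal).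
  rewrite IH, tech5, Nat.sub_0_r. ring.
Qed.

Lemma sum_box_opp (g : Z -> R) N :
  sum_f_R0 (fun j => g (- box_index N j)%Z) (2 * N) = sum_f_R0 (fun j => g (box_index N j)) (2 * N).
Proof.
  rewrite <- sum_f_R0_reverse. apply sum_eq; intros. f_equal. unfold box_index. lia.
Qed.

Lemma sum_f_R0_shift (h : nat -> R) n :
  sum_f_R0 (fun j => h (S j)) n = sum_f_R0 h n - h 0%nat + h (S n).
Proof. induction n as [|n IH]; simpl; [ring|]. rewrite IH. ring. Qed.

(* Shifting the window [-N, N] by k only exchanges 2k terms at its ends. *)
Lemma sum_box_shift_nat (g : Z -> R) N B k :
  (forall n, (Z.of_nat N + 1 <= Z.abs n + Z.of_nat k)%Z -> Rabs (g n) <= B) ->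
  Rabs (sum_f_R0 (fun j => g (box_index N j + Z.of_nat k)%Z) (2 * N) -
        sum_f_R0 (fun j => g (box_index N j)) (2 * N)) <= 2 * INR k * B.
Proof.
  induction k as [|k IH]; intros H.
  - simpl. rewrite (sum_eq _ (fun j => g (box_index N j))) by (intros; f_equal; lia).
    rewrite Rminus_diag, Rabs_R0. lra.
  - specialize (IH (fun n hn => H n ltac:(lia))).
    rewrite (sum_eq _ (fun j => g (box_index N (S j) + Z.of_nat k)%Z))
      by (intros; f_equal; unfold box_index; lia).
    rewrite (sum_f_R0_shift (fun j => g (box_index N j + Z.of_nat k)%Z)).
    assert (H1 : Rabs (g (box_index N 0 + Z.of_nat k)%Z) <= B)
      by (apply H; unfold box_index; lia).
    assert (H2 : Rabs (g (box_index N (S (2 * N)) + Z.of_nat k)%Z) <= B)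
      by (apply H; unfold box_index; lia).
    rewrite S_INR.
    match goal with |- Rabs (?a - ?b + ?c - ?d) <= _ =>
      replace (a - b + c - d) with ((a - d) - b + c) by ring end.
    eapply Rle_trans; [apply Rabs_triang|].
    eapply Rle_trans; [apply Rplus_le_compat_r, Rabs_triang|].
    rewrite Rabs_Ropp. lra.
Qed.

Lemma sum_box_shift (g : Z -> R) N B c :
  (forall n, (Z.of_nat N + 1 <= Z.abs n + Z.abs c)%Z -> Rabs (g n) <= B) ->
  Rabs (sum_f_R0 (fun j => g (box_index N j + c)%Z) (2 * N) -
        sum_f_R0 (fun j => g (box_index N j)) (2 * N)) <= 2 * IZR (Z.abs c) * B.
Proof.
  intro H. set (k := Z.to_nat (Z.abs c)).
  replace (IZR (Z.abs c)) with (INR k) by (rewrite INR_IZR_INZ; f_equal; lia).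
  destruct (Z_le_gt_dec 0 c).
  - replace c with (Z.of_nat k) by lia.
    apply sum_box_shift_nat. intros n hn; apply H; lia.
  - rewrite <- (sum_box_opp (fun z => g (z + c)%Z)), <- (sum_box_opp g).
    rewrite (sum_eq _ (fun j => g (- (box_index N j + Z.of_nat k))%Z))
      by (intros; f_equal; lia).
    apply (sum_box_shift_nat (fun n => g (- n)%Z)). intros n hn; apply H; lia.
Qed.

(* Under the shear [(m, n) |-> (m, -m-n)], row [m] of the box is shifted by [-m]; the terms
   exchanged lie outside the box of half size, where the decay bound makes them small. *)
Lemma sq_partial_shear_diff s C F N K : 0 < s -> decays s C F -> (2 * K <= N <= 2 * K + 1)%nat ->
  Rabs (sq_partial (fun m n => F m (- m - n)%Z) N - sq_partial F N) <=
  16 * C * Rpower 2 s / Rpower (INR K + 1) (2 * s - 2).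
Proof.
  intros hs hF hK. pose proof (decays_nonneg _ _ _ hF) as hC.
  set (b := decay_tail s C K).
  assert (hb : 0 <= b) by now apply decay_tail_nonneg.
  assert (Erow : forall i, sum_f_R0 (fun j =>
      punctured (fun m n => F m (- m - n)%Z) (box_index N i) (box_index N j)) (2 * N) =
    sum_f_R0 (fun j => punctured F (box_index N i) (box_index N j + - box_index N i)%Z) (2 * N)).
  { intro i. rewrite <- (sum_box_opp (punctured (fun m n => F m (- m - n)%Z) (box_index N i))).
    apply sum_eq; intros j hj. unfold punctured.
    destruct (Z.eqb_spec (box_index N i) 0), (Z.eqb_spec (- box_index N j) 0),
      (Z.eqb_spec (box_index N j + - box_index N i) 0); simpl; auto; try lia; f_equal; lia. }
  rewrite !sq_partial_punctured, (sum_eq _ _ _ (fun i _ => Erow i)), <- minus_sum.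
  eapply Rle_trans; [apply (sum_f_R0_abs_le _ _ (2 * INR N * b))|].
  - intros i hi. set (m := box_index N i).
    eapply Rle_trans; [apply (sum_box_shift (punctured F m) N b (- m)%Z)|].
    + intros n hn. apply punctured_le_decay_tail; auto. lia.
    + assert (IZR (Z.abs (- m)) <= INR N)
        by (rewrite INR_IZR_INZ; apply IZR_le; unfold m, box_index; lia). nra.
  - assert (hN : INR N <= 2 * INR K + 1).
    { replace (2 * INR K + 1) with (INR (2 * K + 1)) by (rewrite plus_INR, mult_INR; simpl; ring).
      apply le_INR. lia. }
    pose proof (pos_INR N). pose proof (pos_INR K).
    apply Rle_trans with (16 * (INR K + 1) ^ 2 * b).
    + rewrite S_INR, mult_INR. simpl (INR 2).
      replace (((1 + 1) * INR N + 1) * (2 * INR N * b)) with (((2 * INR N + 1) * (2 * INR N)) * b)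
        by ring.
      apply Rmult_le_compat_r; nra.
    + right. unfold b. rewrite decay_tail_eq. pose proof (Rpower_pos (INR K + 1) (2 * s - 2)).
      replace (Rpower (INR K + 1) (2 * s)) with (Rpower (INR K + 1) (2 * s - 2) * (INR K + 1) ^ 2)
        by (rewrite <- (Rpower_pow 2 (INR K + 1)), <- Rpower_plus by lra; f_equal; simpl; ring).
      field. lra.
Qed.

Lemma Rpower_inv_small a e : 0 < a -> 0 < e ->
  exists K0, forall K, (K0 <= K)%nat -> / Rpower (INR K + 1) a < e.
Proof.
  intros ha he. set (X := Rpower (/ e) (/ a)).
  destruct (INR_archimed 1 X) as [K0 HK0]; [lra|]. exists K0. intros K hK.
  apply le_INR in hK. assert (hX : 0 < X) by apply Rpower_pos.
  assert (H : Rpower X a < Rpower (INR K + 1) a) by (apply Rlt_Rpower_l; lra).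
  unfold X in H. rewrite Rpower_mult, Rinv_l, Rpower_1 in H by (auto with real; lra).
  rewrite <- (Rinv_inv e). apply Rinv_lt_contravar; auto.
  apply Rmult_lt_0_compat; [apply Rinv_0_lt_compat; auto | apply Rpower_pos].
Qed.

Lemma is_lattice_sum_shear s C F L : 1 < s -> decays s C F -> is_lattice_sum F L ->
  is_lattice_sum (fun m n => F m (- m - n)%Z) L.
Proof.
  intros hs hF HF e he.
  set (M := 16 * C * Rpower 2 s).
  assert (hM : 0 <= M)
    by (unfold M; pose proof (Rpower_pos 2 s); pose proof (decays_nonneg _ _ _ hF); nra).
  destruct (Rpower_inv_small (2 * s - 2) (e / 2 / (M + 1))) as [K0 HK0];
    [lra | apply Rdiv_lt_0_compat; lra |].
  destruct (HF (e / 2)) as [N1 HN1]; [lra|].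
  exists (max N1 (2 * K0 + 2)). intros N hN.
  set (K := (N / 2)%nat).
  assert (hK : (2 * K <= N <= 2 * K + 1)%nat).
  { pose proof (Nat.div_mod N 2 ltac:(lia)). pose proof (Nat.mod_upper_bound N 2 ltac:(lia)).
    unfold K. lia. }
  pose proof (sq_partial_shear_diff s C F N K ltac:(lra) hF hK) as Hd.
  specialize (HN1 N ltac:(lia)). specialize (HK0 K ltac:(lia)).
  assert (Hs : M / Rpower (INR K + 1) (2 * s - 2) < e / 2).
  { pose proof (Rpower_pos (INR K + 1) (2 * s - 2)).
    assert (0 < / Rpower (INR K + 1) (2 * s - 2)) by (apply Rinv_0_lt_compat; auto).
    apply Rle_lt_trans with ((M + 1) * / Rpower (INR K + 1) (2 * s - 2)); [unfold Rdiv; nra|].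
    replace (e / 2) with ((M + 1) * (e / 2 / (M + 1))) by (field; lra).
    apply Rmult_lt_compat_l; lra. }
  unfold Rdist in *.
  replace (sq_partial (fun m n => F m (- m - n)%Z) N - L) with
    ((sq_partial (fun m n => F m (- m - n)%Z) N - sq_partial F N) + (sq_partial F N - L)) by ring.
  eapply Rle_lt_trans; [apply Rabs_triang|]. unfold M in Hs. lra.
Qed.

(* The rotation of order 3 of the hexagonal lattice, in the basis [(1, 0)], [(1/2, hex_y)]. *)
Definition rot (F : Z -> Z -> R) (m n : Z) : R := F n (- n - m)%Z.

Lemma hexq_rot m n : hexq n (- n - m)%Z = hexq m n.
Proof. unfold hexq. rewrite minus_IZR, opp_IZR. ring. Qed.

Lemma rot_nonzero m n : (m, n) <> (0%Z, 0%Z) -> (n, (- n - m)%Z) <> (0%Z, 0%Z).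
Proof. intros H E. inversion E. apply H. f_equal; lia. Qed.

Lemma decays_rot s C F : decays s C F -> decays s C (rot F).
Proof.
  intros H m n hmn. unfold rot. rewrite <- (hexq_rot m n). apply H, rot_nonzero, hmn.
Qed.

Lemma is_lattice_sum_rot s C F L : 1 < s -> decays s C F -> is_lattice_sum F L ->
  is_lattice_sum (rot F) L.
Proof.
  intros hs hF HF. apply (is_lattice_sum_transpose (fun m n => F m (- m - n)%Z)).
  now apply (is_lattice_sum_shear s C).
Qed.

Lemma Rpower_plus_INR x s j : 0 < x -> Rpower x (s + INR j) = Rpower x s * x ^ j.
Proof. intro. rewrite Rpower_plus, Rpower_pow; auto. Qed.

(* A lattice sum may be computed after averaging its summand over the rotation group. *)
Lemma is_lattice_sum_rot_average s (j : nat) D c Z f : 1 < s ->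
  (forall m n, Rabs (f m n) <= D * hexq m n ^ j) ->
  (forall m n, f m n + f n (- n - m)%Z + f (- n - m)%Z m = c * hexq m n ^ j) ->
  is_lattice_sum (fun m n => 1 / Rpower (hexq m n) s) Z ->
  is_lattice_sum (fun m n => f m n / Rpower (hexq m n) (s + INR j)) (c / 3 * Z).
Proof.
  intros hs hf hsum HZ.
  set (F := fun m n => f m n / Rpower (hexq m n) (s + INR j)).
  assert (hF : decays s D F).
  { intros m n hmn. unfold F. pose proof (hexq_pos m n hmn) as hQ.
    rewrite Rpower_plus_INR by auto. pose proof (Rpower_pos (hexq m n) s).
    pose proof (pow_lt _ j hQ).
    unfold Rdiv. rewrite Rabs_mult, Rabs_inv, (Rabs_pos_eq (_ * _)) by nra.
    apply Rle_trans with (D * hexq m n ^ j * / (Rpower (hexq m n) s * hexq m n ^ j)).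
    - apply Rmult_le_compat_r; auto. left. apply Rinv_0_lt_compat. nra.
    - right. field. split; apply Rgt_not_eq; auto. }
  destruct (is_lattice_sum_of_decays s D F hs hF) as [L HL].
  pose proof (is_lattice_sum_rot s D F L hs hF HL) as HL1.
  pose proof (is_lattice_sum_rot s D (rot F) L hs (decays_rot _ _ _ hF) HL1) as HL2.
  pose proof (is_lattice_sum_add _ _ _ _ (is_lattice_sum_add _ _ _ _ HL HL1) HL2) as H3.
  apply (is_lattice_sum_ext _ (fun m n => c * (1 / Rpower (hexq m n) s))) in H3.
  - replace (c / 3 * Z) with L; [exact HL|].
    pose proof (is_lattice_sum_unique _ _ _ H3 (is_lattice_sum_scal c _ _ HZ)). lra.
  - intros m n hmn. unfold rot, F. rewrite !hexq_rot.
    replace (- (- n - m) - n)%Z with m by lia.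
    pose proof (hexq_pos m n hmn) as hQ. rewrite Rpower_plus_INR by auto.
    pose proof (Rpower_pos (hexq m n) s). pose proof (pow_lt _ j hQ).
    transitivity ((f m n + f n (- n - m)%Z + f (- n - m)%Z m) /
      (Rpower (hexq m n) s * hexq m n ^ j)).
    + field. split; apply Rgt_not_eq; auto.
    + rewrite hsum. field. split; apply Rgt_not_eq; auto.
Qed.

(** * The Epstein zeta function of the hexagonal lattice *)

Definition zeta_hex (s : R) : R := lattice_sum (fun m n => 1 / Rpower (hexq m n) s).

Lemma decays_zeta_hex s : decays s 1 (fun m n => 1 / Rpower (hexq m n) s).
Proof.
  intros m n _. rewrite Rabs_pos_eq; [lra|].
  left; apply Rdiv_lt_0_compat; [lra | apply Rpower_pos].
Qed.

Lemma is_lattice_sum_zeta_hex s : 1 < s ->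
  is_lattice_sum (fun m n => 1 / Rpower (hexq m n) s) (zeta_hex s).
Proof.
  intro hs. destruct (is_lattice_sum_of_decays _ _ _ hs (decays_zeta_hex s)) as [L HL].
  unfold zeta_hex. now rewrite (lattice_sum_eq _ _ HL).
Qed.

Lemma sq_partial_growing F : (forall m n, 0 <= F m n) -> Un_growing (sq_partial F).
Proof.
  intros hF N. pose proof (sq_partial_succ F N) as E. unfold box_row in E.
  assert (hG : forall m n, 0 <= punctured F m n)
    by (intros; unfold punctured; destruct (_ && _)%bool; auto; lra).
  assert (hrow : forall m, 0 <= sum_f_R0 (fun j => punctured F m (box_index (S N) j)) (2 * S N))
    by (intros; apply cond_pos_sum; auto).
  assert (0 <= sum_f_R0 (fun i => punctured F (box_index N i) (- (Z.of_nat N + 1))%Z +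
                           punctured F (box_index N i) (Z.of_nat N + 1)%Z) (2 * N)).
  { apply cond_pos_sum. intros i. pose proof (hG (box_index N i) (- (Z.of_nat N + 1))%Z).
    pose proof (hG (box_index N i) (Z.of_nat N + 1)%Z). lra. }
  pose proof (hrow (- (Z.of_nat N + 1))%Z). pose proof (hrow (Z.of_nat N + 1)%Z). lra.
Qed.

Lemma sum_f_R0_ge_term (f : nat -> R) k n :
  (forall i, 0 <= f i) -> (k <= n)%nat -> f k <= sum_f_R0 f n.
Proof.
  intros H hk. induction n as [|n IH].
  - replace k with 0%nat by lia. simpl; lra.
  - rewrite tech5. destruct (Nat.eq_dec k (S n)) as [->|hne].
    + pose proof (cond_pos_sum f n H). lra.
    + pose proof (H (S n)). pose proof (IH ltac:(lia)). lra.
Qed.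

Lemma zeta_hex_ge_1 s : 1 < s -> 1 <= zeta_hex s.
Proof.
  intro hs. set (F := fun m n => 1 / Rpower (hexq m n) s).
  assert (hF : forall m n, 0 <= F m n)
    by (intros; left; apply Rdiv_lt_0_compat; [lra | apply Rpower_pos]).
  assert (hG : forall m n, 0 <= punctured F m n)
    by (intros; unfold punctured; destruct (_ && _)%bool; auto; lra).
  eapply Rle_trans;
    [|apply (growing_ineq _ _ (sq_partial_growing F hF) (is_lattice_sum_zeta_hex s hs) 1%nat)].
  (* the term [(m, n) = (1, 0)] of the box [-1, 1]^2 *)
  rewrite sq_partial_punctured.
  eapply Rle_trans; [|apply (sum_f_R0_ge_term _ 2%nat); [intros; apply cond_pos_sum; auto | lia]].
  eapply Rle_trans; [|apply (sum_f_R0_ge_term _ 1%nat); [intros; apply hG | lia]].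
  unfold punctured, box_index, F, hexq. simpl.
  replace (1 * (1 * 1) + 1 * 0 + 0 * (0 * 1)) with 1 by ring. rewrite Rpower_base_1. lra.
Qed.

(* [(m + (1/2 + u) n)^2 = (m + n/2)^2 + 2 u ell m n + u^2 n^2]. *)
Definition ell (m n : Z) : R := (IZR m + IZR n / 2) * IZR n.

Lemma ell_abs_le m n : Rabs (ell m n) <= hexq m n.
Proof.
  unfold ell, hexq. apply Rabs_le. pose proof (pow2_ge_0 (IZR m + IZR n)).
  pose proof (pow2_ge_0 (IZR n)). pose proof (pow2_ge_0 (IZR m)). simpl in *. split; nra.
Qed.

Ltac hex_field := unfold ell, hexq; rewrite ?minus_IZR, ?opp_IZR; field.

Section Moments.
Variable s : R.
Hypothesis hs : 1 < s.

Lemma is_lattice_sum_ell :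
  is_lattice_sum (fun m n => ell m n / Rpower (hexq m n) (s + INR 1)) 0.
Proof.
  replace 0 with (0 / 3 * zeta_hex s) by field.
  apply (is_lattice_sum_rot_average s 1 1); auto.
  - intros. rewrite Rmult_1_l, pow_1. apply ell_abs_le.
  - intros. hex_field.
  - now apply is_lattice_sum_zeta_hex.
Qed.

Lemma is_lattice_sum_sq_n :
  is_lattice_sum (fun m n => IZR n ^ 2 / Rpower (hexq m n) (s + INR 1)) (2 / 3 * zeta_hex s).
Proof.
  apply (is_lattice_sum_rot_average s 1 2); auto.
  - intros. destruct (hexq_bounds m n) as (_ & _ & h). rewrite Rabs_pos_eq by apply pow2_ge_0.
    lra.
  - intros. hex_field.
  - now apply is_lattice_sum_zeta_hex.
Qed.

Lemma is_lattice_sum_sq_ell :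
  is_lattice_sum (fun m n => ell m n ^ 2 / Rpower (hexq m n) (s + INR 2)) (1 / 2 / 3 * zeta_hex s).
Proof.
  apply (is_lattice_sum_rot_average s 2 1); auto.
  - intros. pose proof (ell_abs_le m n). rewrite Rabs_pos_eq by apply pow2_ge_0.
    rewrite <- (pow2_abs (ell m n)). pose proof (Rabs_pos (ell m n)). simpl. nra.
  - intros. hex_field.
  - now apply is_lattice_sum_zeta_hex.
Qed.

Lemma is_lattice_sum_ell_sq_n :
  is_lattice_sum (fun m n => ell m n * IZR n ^ 2 / Rpower (hexq m n) (s + INR 2)) 0.
Proof.
  replace 0 with (0 / 3 * zeta_hex s) by field.
  apply (is_lattice_sum_rot_average s 2 2); auto.
  - intros. pose proof (ell_abs_le m n). destruct (hexq_bounds m n) as (_ & _ & h).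
    rewrite Rabs_mult, (Rabs_pos_eq (IZR n ^ 2)) by apply pow2_ge_0.
    pose proof (Rabs_pos (ell m n)). pose proof (pow2_ge_0 (IZR n)). simpl in *. nra.
  - intros. hex_field.
  - now apply is_lattice_sum_zeta_hex.
Qed.

Lemma is_lattice_sum_pow4_n :
  is_lattice_sum (fun m n => IZR n ^ 4 / Rpower (hexq m n) (s + INR 2)) (2 / 3 * zeta_hex s).
Proof.
  apply (is_lattice_sum_rot_average s 2 4); auto.
  - intros. destruct (hexq_bounds m n) as (_ & _ & h). pose proof (pow2_ge_0 (IZR n)).
    rewrite Rabs_pos_eq by (replace (IZR n ^ 4) with ((IZR n ^ 2) ^ 2) by ring; apply pow2_ge_0).
    replace (IZR n ^ 4) with ((IZR n ^ 2) ^ 2) by ring. simpl in *. nra.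
  - intros. hex_field.
  - now apply is_lattice_sum_zeta_hex.
Qed.

Lemma S1_zeta_hex : S1 (s + 2) = 2 / 3 * zeta_hex s.
Proof.
  apply lattice_sum_eq.
  apply (is_lattice_sum_ext (fun m n => IZR m ^ 4 / Rpower (hexq m n) (s + INR 2))).
  - intros. unfold hexq. now replace (INR 2) with 2 by (simpl; ring).
  - apply (is_lattice_sum_rot_average s 2 4); auto.
    + intros. destruct (hexq_bounds m n) as (_ & h & _). pose proof (pow2_ge_0 (IZR m)).
      rewrite Rabs_pos_eq by (replace (IZR m ^ 4) with ((IZR m ^ 2) ^ 2) by ring; apply pow2_ge_0).
      replace (IZR m ^ 4) with ((IZR m ^ 2) ^ 2) by ring. simpl in *. nra.
    + intros. hex_field.
    + now apply is_lattice_sum_zeta_hex.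
Qed.

End Moments.

(** * Second-order Taylor bounds *)

Lemma is_derive_Rpower x b : 0 < x -> is_derive (fun x => Rpower x b) x (b * Rpower x (b - 1)).
Proof. intro hx. apply is_derive_Reals, derivable_pt_lim_power, hx. Qed.

Lemma abs_le_pow_of_derive (g g' : R -> R) K k : 0 <= K ->
  (forall x, Rabs x <= 1/2 -> is_derive g x (g' x)) -> g 0 = 0 ->
  (forall x, Rabs x <= 1/2 -> Rabs (g' x) <= K * Rabs x ^ k) ->
  forall t, Rabs t <= 1/2 -> Rabs (g t) <= K * Rabs t ^ S k.
Proof.
  intros hK hd h0 hb t ht.
  destruct (MVT_cor4 g g' 0 (1/2)) with (b := t) as [c [Hc hc]].
  - intros c hc. apply hd. now rewrite Rminus_0_r in hc.
  - now rewrite Rminus_0_r.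
  rewrite h0, !Rminus_0_r in Hc. rewrite !Rminus_0_r in hc.
  rewrite Hc, Rabs_mult. simpl.
  assert (Rabs c ^ k <= Rabs t ^ k) by (apply pow_incr; split; [apply Rabs_pos | exact hc]).
  specialize (hb c ltac:(lra)). pose proof (Rabs_pos t).
  rewrite (Rmult_comm (Rabs t)), <- Rmult_assoc.
  apply Rmult_le_compat_r; [lra|]. eapply Rle_trans; [exact hb|]. now apply Rmult_le_compat_l.
Qed.

Lemma Rpower_le_on_interval b x : 1/2 <= x <= 3/2 -> Rpower x b <= Rpower (1/2) b + Rpower (3/2) b.
Proof.
  intro hx. pose proof (Rpower_pos (1/2) b). pose proof (Rpower_pos (3/2) b).
  destruct (Rle_dec 0 b).
  - assert (Rpower x b <= Rpower (3/2) b) by (apply Rle_Rpower_l; lra). lra.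
  - assert (Hinv : Rpower (1/2) (- b) <= Rpower x (- b)) by (apply Rle_Rpower_l; lra).
    rewrite !Rpower_Ropp in Hinv.
    assert (Rpower x b <= Rpower (1/2) b).
    { rewrite <- (Rinv_inv (Rpower x b)), <- (Rinv_inv (Rpower (1/2) b)).
      apply Rinv_le_contravar; auto. apply Rinv_0_lt_compat, Rpower_pos. }
    lra.
Qed.

Ltac derive_Rpower :=
  auto_derive; [eexists; apply is_derive_Rpower; lra |];
  erewrite is_derive_unique by (apply is_derive_Rpower; lra).

Lemma Rpower_taylor2 a : exists K, 0 <= K /\ forall t, Rabs t <= 1/2 ->
  Rabs (Rpower (1 + t) a - (1 + a * t + a * (a - 1) / 2 * t ^ 2)) <= K * Rabs t ^ 3.
Proof.
  (* [K] bounds the third derivative of [(1 + t)^a] on [|t| <= 1/2]. *)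
  set (K := Rabs (a * (a - 1) * (a - 2)) * (Rpower (1/2) (a - 3) + Rpower (3/2) (a - 3))).
  assert (hK : 0 <= K).
  { unfold K. pose proof (Rpower_pos (1/2) (a - 3)). pose proof (Rpower_pos (3/2) (a - 3)).
    pose proof (Rabs_pos (a * (a - 1) * (a - 2))). nra. }
  exists K. split; [exact hK|].
  assert (hR2 : forall t, Rabs t <= 1/2 ->
    Rabs (a * (a - 1) * Rpower (1 + t) (a - 2) - a * (a - 1)) <= K * Rabs t ^ 1).
  { apply (abs_le_pow_of_derive _ (fun t => a * (a - 1) * (a - 2) * Rpower (1 + t) (a - 3)));
      [exact hK | | |].
    - intros x hx. apply Rabs_le_between in hx. derive_Rpower.
      replace (a - 2 - 1) with (a - 3) by ring. ring.
    - rewrite Rplus_0_r, Rpower_base_1. ring.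
    - intros x hx. apply Rabs_le_between in hx. simpl. rewrite Rmult_1_r.
      unfold K. rewrite Rabs_mult, (Rabs_pos_eq (Rpower _ _)) by (left; apply Rpower_pos).
      apply Rmult_le_compat_l; [apply Rabs_pos|]. apply Rpower_le_on_interval. lra. }
  assert (hR1 : forall t, Rabs t <= 1/2 ->
    Rabs (a * Rpower (1 + t) (a - 1) - a - a * (a - 1) * t) <= K * Rabs t ^ 2).
  { apply (abs_le_pow_of_derive _ (fun t => a * (a - 1) * Rpower (1 + t) (a - 2) - a * (a - 1))
      K 1 hK); [| | exact hR2].
    - intros x hx. apply Rabs_le_between in hx. derive_Rpower.
      replace (a - 1 - 1) with (a - 2) by ring. ring.
    - rewrite Rplus_0_r, Rpower_base_1. ring. }
  intros t ht.
  apply (abs_le_pow_of_derive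
    (fun t => Rpower (1 + t) a - (1 + a * t + a * (a - 1) / 2 * t ^ 2))
    (fun t => a * Rpower (1 + t) (a - 1) - a - a * (a - 1) * t) K 2 hK);
    [| | exact hR1 | exact ht].
  - intros x hx. apply Rabs_le_between in hx. derive_Rpower. simpl. field.
  - rewrite Rplus_0_r, Rpower_base_1. ring.
Qed.

Lemma Rabs_mult_le x y a b : Rabs x <= a -> Rabs y <= b -> Rabs (x * y) <= a * b.
Proof. intros. rewrite Rabs_mult. apply Rmult_le_compat; auto; apply Rabs_pos. Qed.

Lemma second_order_product X1 X2 X3 Y1 Y2 Y3 M p : 0 <= p <= 1 -> 1 <= M ->
  Rabs X1 <= M * p -> Rabs X2 <= M * p ^ 2 -> Rabs X3 <= M * p ^ 3 ->
  Rabs Y1 <= M * p -> Rabs Y2 <= M * p ^ 2 -> Rabs Y3 <= M * p ^ 3 ->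
  Rabs ((1 + X1 + X2 + X3) * (1 + Y1 + Y2 + Y3) - (1 + X1 + X2 + Y1 + Y2 + X1 * Y1))
    <= 10 * M ^ 2 * p ^ 3.
Proof.
  intros hp hM hX1 hX2 hX3 hY1 hY2 hY3.
  assert (hp2 : 0 <= p ^ 2) by apply pow2_ge_0.
  assert (hp32 : p ^ 3 <= p ^ 2)
    by (replace (p ^ 3) with (p ^ 2 * p) by ring; nra).
  assert (hp4 : p ^ 2 * p ^ 2 <= p ^ 3)
    by (replace (p ^ 2 * p ^ 2) with (p ^ 3 * p) by ring;
        pose proof (pow_le p 3 ltac:(lra)); nra).
  assert (hM2 : M * p ^ 3 <= M ^ 2 * p ^ 3)
    by (apply Rmult_le_compat_r; [apply pow_le; lra | simpl; nra]).
  assert (hX : Rabs (X2 + X3) <= 2 * M * p ^ 2)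
    by (pose proof (Rabs_triang X2 X3); nra).
  assert (hY : Rabs (Y2 + Y3) <= 2 * M * p ^ 2)
    by (pose proof (Rabs_triang Y2 Y3); nra).
  pose proof (Rabs_mult_le _ _ _ _ hX1 hY) as h1.
  pose proof (Rabs_mult_le _ _ _ _ hX hY1) as h2.
  pose proof (Rabs_mult_le _ _ _ _ hX hY) as h3.
  replace ((1 + X1 + X2 + X3) * (1 + Y1 + Y2 + Y3) - (1 + X1 + X2 + Y1 + Y2 + X1 * Y1))
    with (X3 + Y3 + X1 * (Y2 + Y3) + (X2 + X3) * Y1 + (X2 + X3) * (Y2 + Y3)) by ring.
  pose proof (Rabs_triang (X3 + Y3 + X1 * (Y2 + Y3) + (X2 + X3) * Y1) ((X2 + X3) * (Y2 + Y3))).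
  pose proof (Rabs_triang (X3 + Y3 + X1 * (Y2 + Y3)) ((X2 + X3) * Y1)).
  pose proof (Rabs_triang (X3 + Y3) (X1 * (Y2 + Y3))).
  pose proof (Rabs_triang X3 Y3).
  assert (M * p * (2 * M * p ^ 2) = 2 * (M ^ 2 * p ^ 3)) by ring.
  assert (2 * M * p ^ 2 * (M * p) = 2 * (M ^ 2 * p ^ 3)) by ring.
  assert (2 * M * p ^ 2 * (2 * M * p ^ 2) = 4 * M ^ 2 * (p ^ 2 * p ^ 2)) by ring.
  assert (M ^ 2 * (p ^ 2 * p ^ 2) <= M ^ 2 * p ^ 3) by (apply Rmult_le_compat_l; nra).
  lra.
Qed.

(** * Expansion around the hexagonal point *)

Definition qform (x y : R) (m n : Z) : R := 1 / y * (IZR m + x * IZR n) ^ 2 + y * IZR n ^ 2.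

Lemma qform_pos x y m n : 0 < y -> (m, n) <> (0%Z, 0%Z) -> 0 < qform x y m n.
Proof.
  intros hy hmn. unfold qform.
  assert (h1 : 0 <= 1 / y * (IZR m + x * IZR n) ^ 2)
    by (apply Rmult_le_pos; [left; apply Rdiv_lt_0_compat | apply pow2_ge_0]; lra).
  destruct (Z.eq_dec n 0) as [->|hn].
  - assert (hm : IZR m <> 0) by (apply not_0_IZR; congruence).
    rewrite Rmult_0_r, Rplus_0_r, pow_i, Rmult_0_r, Rplus_0_r by lia.
    apply Rmult_lt_0_compat; [apply Rdiv_lt_0_compat; lra|].
    simpl. rewrite Rmult_1_r. now apply Rsqr_pos_lt.
  - assert (0 < IZR n ^ 2)
      by (simpl; rewrite Rmult_1_r; apply Rsqr_pos_lt, not_0_IZR, hn).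
    nra.
Qed.

Definition hex_y : R := sqrt 3 / 2.

Lemma hex_y_sq : hex_y ^ 2 = 3 / 4.
Proof.
  unfold hex_y. replace ((sqrt 3 / 2) ^ 2) with (sqrt 3 * sqrt 3 / 4) by field.
  rewrite sqrt_sqrt; lra.
Qed.

Lemma hex_y_bounds : 1/2 < hex_y < 1.
Proof.
  pose proof hex_y_sq. assert (0 < hex_y) by (apply Rdiv_lt_0_compat; [apply sqrt_lt_R0|]; lra).
  simpl in *. split; nra.
Qed.

Definition delta_v (v : R) : R := v / hex_y.
Definition alpha_uv (u v : R) (m n : Z) : R :=
  (2 * ell m n * u + 2 * hex_y * IZR n ^ 2 * v) / hexq m n.
Definition beta_uv (u v : R) (m n : Z) : R := IZR n ^ 2 * (u ^ 2 + v ^ 2) / hexq m n.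

Lemma qform_hex_perturbed u v m n : (m, n) <> (0%Z, 0%Z) -> Rabs v <= 1/10 ->
  qform (1/2 + u) (hex_y + v) m n =
  hexq m n * (1 + (alpha_uv u v m n + beta_uv u v m n)) / (hex_y * (1 + delta_v v)).
Proof.
  intros hmn hv. pose proof (hexq_pos m n hmn). pose proof hex_y_sq as hy2.
  pose proof hex_y_bounds. apply Rabs_le_between in hv.
  unfold qform, alpha_uv, beta_uv, delta_v, ell.
  replace (hex_y * (1 + v / hex_y)) with (hex_y + v) by (field; lra).
  unfold hexq in *. field_simplify; [|lra..]. rewrite hy2. field. lra.
Qed.

Lemma perturbation_bounds u v m n : (m, n) <> (0%Z, 0%Z) ->
  Rabs (delta_v v) <= 2 * (Rabs u + Rabs v) /\
  Rabs (alpha_uv u v m n) <= 4 * (Rabs u + Rabs v) /\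
  0 <= beta_uv u v m n <= 2 * (Rabs u + Rabs v) ^ 2.
Proof.
  intro hmn. pose proof (hexq_pos m n hmn) as hQ. pose proof hex_y_bounds.
  pose proof (ell_abs_le m n). destruct (hexq_bounds m n) as (_ & _ & hn).
  pose proof (Rabs_pos u). pose proof (Rabs_pos v). pose proof (pow2_ge_0 (IZR n)).
  split; [|split].
  - unfold delta_v, Rdiv. rewrite Rabs_mult, Rabs_inv, (Rabs_pos_eq hex_y) by lra.
    apply Rle_trans with (Rabs v * 2); [|lra]. apply Rmult_le_compat_l; [lra|].
    replace 2 with (/ (1/2)) by field. apply Rinv_le_contravar; lra.
  - unfold alpha_uv, Rdiv. rewrite Rabs_mult, Rabs_inv, (Rabs_pos_eq (hexq m n)) by lra.
    apply Rle_trans with (4 * hexq m n * (Rabs u + Rabs v) * / hexq m n); [|right; field; lra].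
    apply Rmult_le_compat_r; [left; apply Rinv_0_lt_compat; auto|].
    eapply Rle_trans; [apply Rabs_triang|]. rewrite !Rabs_mult.
    rewrite (Rabs_pos_eq 2), (Rabs_pos_eq hex_y), (Rabs_pos_eq (IZR n ^ 2)) by lra.
    pose proof (Rabs_pos (ell m n)).
    assert (Rabs (ell m n) * Rabs u <= hexq m n * Rabs u) by (apply Rmult_le_compat_r; auto).
    assert (hex_y * IZR n ^ 2 * Rabs v <= 2 * hexq m n * Rabs v)
      by (apply Rmult_le_compat_r; [auto | nra]).
    nra.
  - assert (h : u ^ 2 + v ^ 2 <= (Rabs u + Rabs v) ^ 2)
      by (rewrite <- (pow2_abs u), <- (pow2_abs v); nra).
    pose proof (pow2_ge_0 u). pose proof (pow2_ge_0 v).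
    unfold beta_uv. split.
    + unfold Rdiv. apply Rmult_le_pos; [nra | left; apply Rinv_0_lt_compat; lra].
    + apply Rle_trans with (2 * hexq m n * (Rabs u + Rabs v) ^ 2 / hexq m n); [|right; field; lra].
      unfold Rdiv. apply Rmult_le_compat_r; [left; apply Rinv_0_lt_compat; auto|].
      pose proof (pow2_ge_0 (Rabs u + Rabs v)). nra.
Qed.

Lemma summand_factor s u v m n : (m, n) <> (0%Z, 0%Z) -> Rabs u + Rabs v <= 1/10 ->
  1 / Rpower (qform (1/2 + u) (hex_y + v) m n) s =
  Rpower hex_y s / Rpower (hexq m n) s *
  (Rpower (1 + delta_v v) s * Rpower (1 + (alpha_uv u v m n + beta_uv u v m n)) (- s)).
Proof.
  intros hmn hp. pose proof (Rabs_pos u). pose proof (Rabs_pos v).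
  destruct (perturbation_bounds u v m n hmn) as (hd & ha & hb).
  apply Rabs_le_between in hd. apply Rabs_le_between in ha.
  pose proof (hexq_pos m n hmn). pose proof hex_y_bounds.
  rewrite qform_hex_perturbed by (auto; lra).
  assert (he : 0 < 1 + (alpha_uv u v m n + beta_uv u v m n)) by lra.
  assert (hd1 : 0 < 1 + delta_v v) by lra. assert (hy : 0 < hex_y) by lra.
  set (e := alpha_uv u v m n + beta_uv u v m n) in *. set (d := delta_v v) in *.
  rewrite Rpower_div, <- (Rpower_mult_distr (hexq m n) (1 + e)),
    <- (Rpower_mult_distr hex_y (1 + d)), Rpower_Ropp;
    try (apply Rmult_lt_0_compat; lra); try lra.
  pose proof (Rpower_pos hex_y s). pose proof (Rpower_pos (hexq m n) s).
  pose proof (Rpower_pos (1 + d) s). pose proof (Rpower_pos (1 + e) s).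
  field. repeat split; lra.
Qed.

(* The summand of the Epstein zeta function at [(1/2 + u, hex_y + v)], expanded to second
   order: the factors [(1 + delta)^s] and [(1 + alpha + beta)^(-s)] are truncated separately. *)
Definition summand2 (s u v : R) (m n : Z) : R :=
  let d := delta_v v in let a := alpha_uv u v m n in let b := beta_uv u v m n in
  Rpower hex_y s / Rpower (hexq m n) s *
  (1 + s * d + s * (s - 1) / 2 * d ^ 2 + - s * a + (- s * b + s * (s + 1) / 2 * a ^ 2) +
   s * d * (- s * a)).

Lemma expansion_bounds_delta s K1 d p : 1 < s -> 0 <= K1 -> 0 <= p <= 1/10 -> Rabs d <= 2 * p ->
  (forall t, Rabs t <= 1/2 ->
     Rabs (Rpower (1 + t) s - (1 + s * t + s * (s - 1) / 2 * t ^ 2)) <= K1 * Rabs t ^ 3) ->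
  Rabs (s * d) <= 2 * s * p /\ Rabs (s * (s - 1) / 2 * d ^ 2) <= 2 * s ^ 2 * p ^ 2 /\
  Rabs (Rpower (1 + d) s - (1 + s * d + s * (s - 1) / 2 * d ^ 2)) <= 8 * K1 * p ^ 3.
Proof.
  intros hs hK1 hp hd T1. pose proof (Rabs_pos d).
  assert (hd2 : d ^ 2 <= 4 * p ^ 2) by (rewrite <- (pow2_abs d); nra).
  split; [|split].
  - rewrite Rabs_mult, Rabs_pos_eq by lra. nra.
  - rewrite Rabs_mult, (Rabs_pos_eq (_ / 2)), Rabs_pos_eq by (try apply pow2_ge_0; nra). nra.
  - eapply Rle_trans; [apply T1; lra|].
    assert (Rabs d ^ 3 <= (2 * p) ^ 3) by (apply pow_incr; lra). nra.
Qed.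

Lemma expansion_bounds_alpha_beta s K2 a b p : 1 < s -> 0 <= K2 -> 0 <= p <= 1/10 ->
  Rabs a <= 4 * p -> 0 <= b <= 2 * p ^ 2 ->
  (forall t, Rabs t <= 1/2 ->
     Rabs (Rpower (1 + t) (- s) - (1 + - s * t + - s * (- s - 1) / 2 * t ^ 2))
       <= K2 * Rabs t ^ 3) ->
  Rabs (- s * a) <= 4 * s * p /\
  Rabs (- s * b + s * (s + 1) / 2 * a ^ 2) <= 10 * s * (s + 1) * p ^ 2 /\
  Rabs (Rpower (1 + (a + b)) (- s) - (1 + - s * a + (- s * b + s * (s + 1) / 2 * a ^ 2)))
    <= (216 * K2 + 10 * s * (s + 1)) * p ^ 3.
Proof.
  intros hs hK2 hp ha hb T2. pose proof (Rabs_pos a).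
  set (c2 := s * (s + 1) / 2). assert (hc2 : 0 <= c2) by (unfold c2; nra).
  assert (ha2 : a ^ 2 <= 16 * p ^ 2) by (rewrite <- (pow2_abs a); nra).
  assert (hp2 : 0 <= p ^ 2) by apply pow2_ge_0.
  assert (hp3 : 0 <= p ^ 3) by (apply pow_le; lra).
  split; [|split].
  - rewrite Rabs_mult, Rabs_Ropp, Rabs_pos_eq by lra. nra.
  - eapply Rle_trans; [apply Rabs_triang|].
    rewrite !Rabs_mult, Rabs_Ropp, (Rabs_pos_eq s), (Rabs_pos_eq b), (Rabs_pos_eq c2),
      (Rabs_pos_eq (a ^ 2)) by (try apply pow2_ge_0; lra).
    unfold c2 in *. nra.
  - assert (hab : Rabs (a + b) <= 6 * p /\ Rabs (a + b) <= 1/2).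
    { pose proof (Rabs_triang a b) as htr. rewrite (Rabs_pos_eq b) in htr by lra. split; nra. }
    specialize (T2 (a + b) (proj2 hab)).
    replace (- s * (- s - 1) / 2) with c2 in T2 by (unfold c2; field).
    replace (Rpower (1 + (a + b)) (- s) - (1 + - s * a + (- s * b + c2 * a ^ 2))) with
      ((Rpower (1 + (a + b)) (- s) - (1 + - s * (a + b) + c2 * (a + b) ^ 2)) +
       c2 * (2 * a * b + b ^ 2)) by ring.
    eapply Rle_trans; [apply Rabs_triang|].
    assert (Rabs (a + b) ^ 3 <= (6 * p) ^ 3) by (apply pow_incr; split; [apply Rabs_pos | lra]).
    assert (Rabs (2 * a * b + b ^ 2) <= 20 * p ^ 3).
    { eapply Rle_trans; [apply Rabs_triang|].
      rewrite !Rabs_mult, (Rabs_pos_eq 2), (Rabs_pos_eq b), (Rabs_pos_eq (b ^ 2))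
        by (try apply pow2_ge_0; lra).
      assert (Rabs a * b <= 4 * p * (2 * p ^ 2)) by (apply Rmult_le_compat; lra).
      assert (b ^ 2 <= 4 * p ^ 2 * p ^ 2) by (simpl in *; nra).
      assert (p ^ 2 * p ^ 2 <= p ^ 3)
        by (replace (p ^ 2 * p ^ 2) with (p ^ 3 * p) by ring; nra).
      simpl in *. nra. }
    rewrite Rabs_mult, (Rabs_pos_eq c2) by lra. unfold c2 in *. nra.
Qed.

Lemma summand_second_order s : 1 < s -> exists K, 0 <= K /\
  forall u v m n, (m, n) <> (0%Z, 0%Z) -> Rabs u + Rabs v <= 1/10 ->
  Rabs (1 / Rpower (qform (1/2 + u) (hex_y + v) m n) s - summand2 s u v m n) <=
  K * (Rpower hex_y s / Rpower (hexq m n) s) * (Rabs u + Rabs v) ^ 3.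
Proof.
  intro hs. destruct (Rpower_taylor2 s) as [K1 [hK1 T1]].
  destruct (Rpower_taylor2 (- s)) as [K2 [hK2 T2]].
  set (M := 1 + 8 * K1 + 216 * K2 + 20 * s * (s + 1)).
  assert (hM : 1 <= M) by (unfold M; nra).
  exists (10 * M ^ 2). split; [nra|].
  intros u v m n hmn hp. rewrite summand_factor by assumption.
  set (p := Rabs u + Rabs v) in *.
  assert (hp0 : 0 <= p) by (unfold p; pose proof (Rabs_pos u); pose proof (Rabs_pos v); lra).
  destruct (perturbation_bounds u v m n hmn) as (hd & ha & hb). fold p in hd, ha, hb.
  destruct (expansion_bounds_delta s K1 _ p hs hK1 ltac:(lra) hd T1) as (X1 & X2 & X3).
  destruct (expansion_bounds_alpha_beta s K2 _ _ p hs hK2 ltac:(lra) ha hb T2) as (Y1 & Y2 & Y3).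
  unfold summand2. set (d := delta_v v) in *. set (a := alpha_uv u v m n) in *.
  set (b := beta_uv u v m n) in *.
  set (Rs := Rpower hex_y s / Rpower (hexq m n) s).
  assert (hRs : 0 < Rs) by (apply Rdiv_lt_0_compat; apply Rpower_pos).
  rewrite <- Rmult_minus_distr_l, Rabs_mult, (Rabs_pos_eq Rs) by lra.
  replace (10 * M ^ 2 * Rs * p ^ 3) with (Rs * (10 * M ^ 2 * p ^ 3)) by ring.
  apply Rmult_le_compat_l; [lra|].
  set (X := Rpower (1 + d) s) in *. set (Y := Rpower (1 + (a + b)) (- s)) in *.
  set (c2 := s * (s + 1) / 2) in *.
  replace (X * Y - (1 + s * d + s * (s - 1) / 2 * d ^ 2 + - s * a + (- s * b + c2 * a ^ 2) +
                    s * d * (- s * a)))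
    with ((1 + s * d + s * (s - 1) / 2 * d ^ 2 + (X - (1 + s * d + s * (s - 1) / 2 * d ^ 2))) *
          (1 + - s * a + (- s * b + c2 * a ^ 2) + (Y - (1 + - s * a + (- s * b + c2 * a ^ 2)))) -
          (1 + s * d + s * (s - 1) / 2 * d ^ 2 + - s * a + (- s * b + c2 * a ^ 2) +
           s * d * (- s * a))) by ring.
  assert (hp2 : 0 <= p ^ 2) by apply pow2_ge_0. assert (hp3 : 0 <= p ^ 3) by (apply pow_le; lra).
  apply (second_order_product _ _ _ _ _ _ M p); [lra | exact hM | ..]; unfold M; nra.
Qed.

Lemma is_lattice_sum_summand2 s u v : 1 < s ->
  is_lattice_sum (summand2 s u v)
    (Rpower hex_y s * zeta_hex s * (1 + s * (s - 1) / 3 * (u ^ 2 + v ^ 2))).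
Proof.
  intro hs. set (Z := zeta_hex s). set (Rs := Rpower hex_y s).
  set (c2 := s * (s + 1) / 2). set (d := delta_v v).
  pose proof (is_lattice_sum_lin (Rs * (1 + s * d + s * (s - 1) / 2 * d ^ 2))
    (Rs * (- 2 * s * u - 2 * s ^ 2 * d * u)) _ _ _ _
    (is_lattice_sum_zeta_hex s hs) (is_lattice_sum_ell s hs)) as G1.
  pose proof (is_lattice_sum_lin 1
    (Rs * (- 2 * s * hex_y * v - s * (u ^ 2 + v ^ 2) - 2 * s ^ 2 * d * hex_y * v)) _ _ _ _
    G1 (is_lattice_sum_sq_n s hs)) as G2.
  pose proof (is_lattice_sum_lin 1 (Rs * (4 * c2 * u ^ 2)) _ _ _ _
    G2 (is_lattice_sum_sq_ell s hs)) as G3.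
  pose proof (is_lattice_sum_lin 1 (Rs * (8 * c2 * hex_y * u * v)) _ _ _ _
    G3 (is_lattice_sum_ell_sq_n s hs)) as G4.
  pose proof (is_lattice_sum_lin 1 (Rs * (4 * c2 * hex_y ^ 2 * v ^ 2)) _ _ _ _
    G4 (is_lattice_sum_pow4_n s hs)) as G5.
  fold Z in G5. apply (is_lattice_sum_ext _ (summand2 s u v)) in G5.
  - match goal with H : is_lattice_sum _ ?V |- is_lattice_sum _ ?W =>
      replace W with V; [exact H|] end.
    pose proof hex_y_sq as hy2. pose proof hex_y_bounds. unfold d, delta_v, c2.
    field_simplify; [|lra].
    replace (hex_y ^ 4) with ((hex_y ^ 2) ^ 2) by ring.
    replace (hex_y ^ 3) with (hex_y ^ 2 * hex_y) by ring.
    rewrite hy2. field.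
  - intros m n hmn. pose proof (hexq_pos m n hmn).
    rewrite !Rpower_plus_INR by assumption. pose proof (Rpower_pos (hexq m n) s).
    unfold summand2, alpha_uv, beta_uv. fold d Rs. simpl pow. unfold c2.
    field. split; lra.
Qed.

Lemma zeta_form_expansion s : 1 < s -> exists K, 0 <= K /\
  forall u v, Rabs u + Rabs v <= 1/10 ->
  exists Z, is_lattice_sum (fun m n => 1 / Rpower (qform (1/2 + u) (hex_y + v) m n) s) Z /\
  Rabs (Z - Rpower hex_y s * zeta_hex s * (1 + s * (s - 1) / 3 * (u ^ 2 + v ^ 2))) <=
  K * (Rabs u + Rabs v) ^ 3.
Proof.
  intro hs. destruct (summand_second_order s hs) as [K [hK HK]].
  pose proof (zeta_hex_ge_1 s hs). pose proof (Rpower_pos hex_y s).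
  exists (K * Rpower hex_y s * zeta_hex s). split; [apply Rmult_le_pos; nra|].
  intros u v huv.
  set (C := K * Rpower hex_y s * (Rabs u + Rabs v) ^ 3).
  assert (hC : 0 <= C).
  { apply Rmult_le_pos; [nra | apply pow_le].
    pose proof (Rabs_pos u). pose proof (Rabs_pos v). lra. }
  set (Rem := fun m n => 1 / Rpower (qform (1/2 + u) (hex_y + v) m n) s - summand2 s u v m n).
  assert (hRem : decays s C Rem).
  { intros m n hmn. eapply Rle_trans; [apply HK; auto|].
    right. unfold C. field. apply Rgt_not_eq, Rpower_pos. }
  destruct (is_lattice_sum_of_decays s C Rem hs hRem) as [LR HLR].
  set (Z0 := Rpower hex_y s * zeta_hex s * (1 + s * (s - 1) / 3 * (u ^ 2 + v ^ 2))).
  exists (Z0 + LR). split.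
  - eapply is_lattice_sum_ext;
      [|apply (is_lattice_sum_add _ _ _ _ (is_lattice_sum_summand2 s u v hs) HLR)].
    intros. unfold Rem. ring.
  - replace (Z0 + LR - Z0) with LR by ring.
    eapply Rle_trans;
      [apply (is_lattice_sum_abs_le _ _ _ _ HLR
                (is_lattice_sum_scal C _ _ (is_lattice_sum_zeta_hex s hs)))|].
    + intros m n hmn. eapply Rle_trans; [apply hRem; auto|]. right. field.
      apply Rgt_not_eq, Rpower_pos.
    + right. unfold C. ring.
Qed.

Lemma is_lattice_sum_zeta_form_hex s : 1 < s ->
  is_lattice_sum (fun m n => 1 / Rpower (qform (1/2) hex_y m n) s) (Rpower hex_y s * zeta_hex s).
Proof.
  intro hs. destruct (zeta_form_expansion s hs) as [K [_ HK]].
  destruct (HK 0 0) as [Z [HZ EZ]]; [rewrite Rabs_R0; lra|].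
  rewrite !Rplus_0_r in HZ. replace (Rpower hex_y s * zeta_hex s) with Z; [exact HZ|].
  replace ((Rabs 0 + Rabs 0) ^ 3) with 0 in EZ by (rewrite Rabs_R0; ring).
  replace (0 ^ 2 + 0 ^ 2) with 0 in EZ by ring.
  apply Rabs_le_between in EZ. lra.
Qed.

(** * The Lennard-Jones energy *)

Lemma E_f_V_LJ a1 a2 t1 t2 A x y Z1 Z2 : 0 < A -> 0 < y ->
  is_lattice_sum (fun m n => 1 / Rpower (qform x y m n) t1) Z1 ->
  is_lattice_sum (fun m n => 1 / Rpower (qform x y m n) t2) Z2 ->
  E_f (V_LJ a1 a2 t1 t2) x y A = a2 / Rpower A t2 * Z2 - a1 / Rpower A t1 * Z1.
Proof.
  intros hA hy H1 H2. unfold E_f. apply lattice_sum_eq.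
  replace (a2 / Rpower A t2 * Z2 - a1 / Rpower A t1 * Z1)
    with (a2 / Rpower A t2 * Z2 + - (a1 / Rpower A t1) * Z1) by ring.
  eapply is_lattice_sum_ext; [|apply (is_lattice_sum_lin _ _ _ _ _ _ H2 H1)].
  intros m n hmn. pose proof (qform_pos x y m n hy hmn) as hQ. fold (qform x y m n).
  unfold V_LJ. rewrite <- !Rpower_mult_distr by lra.
  pose proof (Rpower_pos A t1). pose proof (Rpower_pos A t2).
  pose proof (Rpower_pos (qform x y m n) t1). pose proof (Rpower_pos (qform x y m n) t2).
  field. repeat split; lra.
Qed.

(* The Hessian of the energy at the hexagonal point is [2 * lj_curvature] times the identity. *)
Definition lj_curvature (a1 a2 t1 t2 A : R) : R :=
  a2 / Rpower A t2 * (Rpower hex_y t2 * zeta_hex t2 * (t2 * (t2 - 1) / 3)) -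
  a1 / Rpower A t1 * (Rpower hex_y t1 * zeta_hex t1 * (t1 * (t1 - 1) / 3)).

Lemma E_f_expansion a1 a2 t1 t2 A : 0 <= a1 -> 0 <= a2 -> 1 < t1 -> 1 < t2 -> 0 < A ->
  exists K, 0 <= K /\ forall u v, Rabs u + Rabs v <= 1/10 ->
  Rabs (E_f (V_LJ a1 a2 t1 t2) (1/2 + u) (hex_y + v) A -
        E_f (V_LJ a1 a2 t1 t2) (1/2) hex_y A - lj_curvature a1 a2 t1 t2 A * (u ^ 2 + v ^ 2)) <=
  K * (Rabs u + Rabs v) ^ 3.
Proof.
  intros ha1 ha2 ht1 ht2 hA.
  destruct (zeta_form_expansion t1 ht1) as [K1 [hK1 HZ1]].
  destruct (zeta_form_expansion t2 ht2) as [K2 [hK2 HZ2]].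
  set (b1 := a1 / Rpower A t1). set (b2 := a2 / Rpower A t2).
  assert (hb1 : 0 <= b1)
    by (apply Rmult_le_pos; [lra | left; apply Rinv_0_lt_compat, Rpower_pos]).
  assert (hb2 : 0 <= b2)
    by (apply Rmult_le_pos; [lra | left; apply Rinv_0_lt_compat, Rpower_pos]).
  exists (b2 * K2 + b1 * K1). split; [nra|].
  intros u v huv. pose proof hex_y_bounds. assert (hy : 0 < hex_y) by lra.
  assert (hv : 0 < hex_y + v)
    by (pose proof (Rabs_pos u); pose proof (Rle_abs (- v)); rewrite Rabs_Ropp in *; lra).
  destruct (HZ1 _ _ huv) as [Z1 [C1 E1]]. destruct (HZ2 _ _ huv) as [Z2 [C2 E2]].
  rewrite (E_f_V_LJ _ _ _ _ _ _ _ _ _ hA hv C1 C2),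
    (E_f_V_LJ _ _ _ _ _ _ _ _ _ hA hy (is_lattice_sum_zeta_form_hex t1 ht1)
       (is_lattice_sum_zeta_form_hex t2 ht2)).
  unfold lj_curvature. fold b1 b2.
  set (Q := u ^ 2 + v ^ 2) in *. set (p := Rabs u + Rabs v) in *.
  match goal with |- Rabs ?L <= _ => replace L with
    (b2 * (Z2 - Rpower hex_y t2 * zeta_hex t2 * (1 + t2 * (t2 - 1) / 3 * Q)) +
     - (b1 * (Z1 - Rpower hex_y t1 * zeta_hex t1 * (1 + t1 * (t1 - 1) / 3 * Q)))) by ring end.
  eapply Rle_trans; [apply Rabs_triang|].
  rewrite Rabs_Ropp, !Rabs_mult, (Rabs_pos_eq b1), (Rabs_pos_eq b2) by lra.
  pose proof (Rmult_le_compat_l _ _ _ hb1 E1). pose proof (Rmult_le_compat_l _ _ _ hb2 E2).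
  lra.
Qed.

Lemma S1_pos t : 1 < t -> 0 < S1 (t + 2).
Proof. intro ht. rewrite S1_zeta_hex by exact ht. pose proof (zeta_hex_ge_1 t ht). lra. Qed.

Lemma lj_curvature_factor a1 a2 t1 t2 A : 0 < a1 -> 0 < a2 -> 1 < t1 -> t1 < t2 -> 0 < A ->
  exists c, 0 < c /\
  lj_curvature a1 a2 t1 t2 A = c * (Rpower (A0 a1 a2 t1 t2 / A) (t2 - t1) - 1).
Proof.
  intros ha1 ha2 ht1 ht12 hA. pose proof hex_y_bounds.
  set (W1 := a1 * t1 * (t1 - 1) * S1 (t1 + 2)). set (W2 := a2 * t2 * (t2 - 1) * S1 (t2 + 2)).
  pose proof (S1_pos t1 ht1). pose proof (S1_pos t2 ltac:(lra)).
  assert (hW1 : 0 < W1) by (unfold W1; repeat apply Rmult_lt_0_compat; lra).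
  assert (hW2 : 0 < W2) by (unfold W2; repeat apply Rmult_lt_0_compat; lra).
  set (r := hex_y / A). assert (hr : 0 < r) by (apply Rdiv_lt_0_compat; lra).
  exists (W1 / 2 * Rpower r t1). split; [apply Rmult_lt_0_compat; [lra | apply Rpower_pos]|].
  assert (E : A0 a1 a2 t1 t2 / A = r * Rpower (W2 / W1) (1 / (t2 - t1)))
    by (unfold A0, r, W1, W2, hex_y; field; lra).
  rewrite E, <- Rpower_mult_distr, Rpower_mult by (try apply Rpower_pos; lra).
  replace (1 / (t2 - t1) * (t2 - t1)) with 1 by (field; lra).
  rewrite Rpower_1 by (apply Rdiv_lt_0_compat; lra).
  assert (Er : forall t, Rpower hex_y t / Rpower A t = Rpower r t)
    by (intro; unfold r; rewrite Rpower_div; lra).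
  assert (Ez : forall t, 1 < t -> zeta_hex t = 3 / 2 * S1 (t + 2))
    by (intros t ht; rewrite S1_zeta_hex by exact ht; field).
  replace (W1 / 2 * Rpower r t1 * (Rpower r (t2 - t1) * (W2 / W1) - 1))
    with (W2 / 2 * (Rpower r t1 * Rpower r (t2 - t1)) - W1 / 2 * Rpower r t1) by (field; lra).
  rewrite <- Rpower_plus. replace (t1 + (t2 - t1)) with t2 by ring.
  unfold lj_curvature. rewrite <- !Er, !Ez by lra.
  unfold W1, W2. pose proof (Rpower_pos A t1). pose proof (Rpower_pos A t2).
  field. lra.
Qed.

Lemma quadratic_dominates_cubic D K : 0 < D -> 0 <= K -> exists eps, 0 < eps /\
  forall u v, Rabs u < eps -> Rabs v < eps -> (u, v) <> (0, 0) ->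
  Rabs u + Rabs v <= 1/10 /\ K * (Rabs u + Rabs v) ^ 3 < D * (u ^ 2 + v ^ 2).
Proof.
  intros hD hK. set (eps := Rmin (1/20) (D / (4 * K + 4))).
  assert (he1 : eps <= 1/20) by apply Rmin_l.
  assert (he2 : eps <= D / (4 * K + 4)) by apply Rmin_r.
  exists eps. split; [apply Rmin_pos; [lra | apply Rdiv_lt_0_compat; lra]|].
  intros u v hu hv huv. set (p := Rabs u + Rabs v).
  pose proof (Rabs_pos u). pose proof (Rabs_pos v).
  assert (hp : 0 < p).
  { destruct (Req_dec u 0) as [->|hu0]; [destruct (Req_dec v 0) as [->|hv0]|].
    - congruence.
    - pose proof (Rabs_pos_lt v hv0). unfold p. lra.
    - pose proof (Rabs_pos_lt u hu0). unfold p. lra. }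
  split; [unfold p; lra|].
  assert (hsq : p ^ 2 <= 2 * (u ^ 2 + v ^ 2)).
  { unfold p. rewrite <- (pow2_abs u), <- (pow2_abs v).
    pose proof (pow2_ge_0 (Rabs u - Rabs v)). nra. }
  assert (hKp : K * p < D / 2).
  { apply Rle_lt_trans with (K * (2 * (D / (4 * K + 4)))).
    - apply Rmult_le_compat_l; unfold p; lra.
    - apply (Rmult_lt_reg_r (4 * K + 4)); [lra|]. field_simplify; lra. }
  assert (0 < p ^ 2) by (apply pow_lt, hp).
  replace (K * p ^ 3) with (K * p * p ^ 2) by ring. nra.
Qed.

Section LocalExtremum.
Variables (g : R -> R -> R) (x0 hex_y D K : R).
Hypothesis hK : 0 <= K.
Hypothesis hg : forall u v, Rabs u + Rabs v <= 1/10 ->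
  Rabs (g (x0 + u) (hex_y + v) - g x0 hex_y - D * (u ^ 2 + v ^ 2)) <= K * (Rabs u + Rabs v) ^ 3.

Lemma strict_local_min_of_expansion : 0 < D -> strict_local_min g x0 hex_y.
Proof.
  intro hD. destruct (quadratic_dominates_cubic D K hD hK) as [eps [he H]].
  exists eps. split; [exact he|]. intros x y _ hx hy hxy.
  assert (hne : (x - x0, y - hex_y) <> (0, 0)) by (intro E; inversion E; apply hxy; f_equal; lra).
  destruct (H _ _ hx hy hne) as [hp hlt]. specialize (hg _ _ hp).
  replace (x0 + (x - x0)) with x in hg by ring. replace (hex_y + (y - hex_y)) with y in hg by ring.
  apply Rabs_le_between in hg. lra.
Qed.

Lemma strict_local_max_of_expansion : D < 0 -> strict_local_max g x0 hex_y.
Proof.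
  intro hD. destruct (quadratic_dominates_cubic (- D) K ltac:(lra) hK) as [eps [he H]].
  exists eps. split; [exact he|]. intros x y _ hx hy hxy.
  assert (hne : (x - x0, y - hex_y) <> (0, 0)) by (intro E; inversion E; apply hxy; f_equal; lra).
  destruct (H _ _ hx hy hne) as [hp hlt]. specialize (hg _ _ hp).
  replace (x0 + (x - x0)) with x in hg by ring. replace (hex_y + (y - hex_y)) with y in hg by ring.
  apply Rabs_le_between in hg. lra.
Qed.

End LocalExtremum.

Theorem theorem4p2 (a1 a2 t1 t2 : R) (ha1 : 0 < a1) (ha2 : 0 < a2)
  (ht1 : 1 < t1) (ht12 : t1 < t2) :
  (forall A, 0 < A -> A < A0 a1 a2 t1 t2 ->
     strict_local_min (fun x y => E_f (V_LJ a1 a2 t1 t2) x y A) (1/2) (sqrt 3 / 2)) /\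
  (forall A, A > A0 a1 a2 t1 t2 ->
     strict_local_max (fun x y => E_f (V_LJ a1 a2 t1 t2) x y A) (1/2) (sqrt 3 / 2)).
Proof.
  assert (hA0 : 0 < A0 a1 a2 t1 t2).
  { pose proof hex_y_bounds. apply Rmult_lt_0_compat; [unfold hex_y in *; lra | apply Rpower_pos]. }
  assert (ht2 : 1 < t2) by lra.
  split.
  - intros A hA hlt.
    destruct (E_f_expansion a1 a2 t1 t2 A ltac:(lra) ltac:(lra) ht1 ht2 hA) as [K [hK HK]].
    apply (strict_local_min_of_expansion _ _ _ _ K hK HK).
    destruct (lj_curvature_factor a1 a2 t1 t2 A ha1 ha2 ht1 ht12 hA) as [c [hc ->]].
    assert (hpow : Rpower 1 (t2 - t1) < Rpower (A0 a1 a2 t1 t2 / A) (t2 - t1)).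
    { apply Rlt_Rpower_l; [lra|]. split; [lra|]. apply Rlt_div_r; lra. }
    rewrite Rpower_base_1 in hpow. nra.
  - intros A hgt. assert (hA : 0 < A) by lra.
    destruct (E_f_expansion a1 a2 t1 t2 A ltac:(lra) ltac:(lra) ht1 ht2 hA) as [K [hK HK]].
    apply (strict_local_max_of_expansion _ _ _ _ K hK HK).
    destruct (lj_curvature_factor a1 a2 t1 t2 A ha1 ha2 ht1 ht12 hA) as [c [hc ->]].
    assert (hpow : Rpower (A0 a1 a2 t1 t2 / A) (t2 - t1) < Rpower 1 (t2 - t1)).
    { apply Rlt_Rpower_l; [lra|]. split; [apply Rdiv_lt_0_compat; lra|].
      apply Rlt_div_l; lra. }
    rewrite Rpower_base_1 in hpow. nra.
Qed.
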